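(* Let $(X,T)$ be a topological dynamical system, $\mathcal{U}$ a finite open cover of $X$ and $f\in C(X,\mathbb{R})$. Then the function $$F:K\mapsto\inf\Big\{\sum_{V\in\mathcal{V}}\sup_{y\in V\cap K}f(y):\ \mathcal{V}\in\mathcal{C}_X,\ \mathcal{V}\succeq\mathcal{U}\Big\}$$ is upper semi-continuous from $\mathcal{K}(X)$ to $\mathbb{R}$.
   Context: A TDS is a compact metric space $(X,d)$ with a homeomorphism $T$. $\mathcal{K}(X)$ is the collection of nonempty closed subsets of $X$ with the Hausdorff metric. $\mathcal{C}_X$ is the set of covers of $X$ (finite families of Borel sets with union $X$); $\mathcal{V}\succeq\mathcal{U}$ means every element of $\mathcal{V}$ lies in some element of $\mathcal{U}$. Terms with $V\cap K=\emptyset$ are omitted from the sum (supremum over the empty set is $-\infty$). *)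

From HB Require Import structures.
From mathcomp Require Import all_boot all_order all_algebra finmap.
From mathcomp Require Import all_classical all_reals all_analysis.
Set Implicit Arguments. Unset Strict Implicit. Unset Printing Implicit Defensive.
Import Order.TTheory GRing.Theory Num.Theory.
Import numFieldTopology.Exports.
Local Open Scope classical_set_scope.
Local Open Scope ring_scope.

Section defs.
Context {R : realType} {X : metricType R}.

Definition borel_set (A : set X) : Prop := <<s open >> A.

Definition is_cover (V : {fset set X}) : Prop :=
  (forall A, A \in V -> borel_set A) /\
  (forall x : X, exists2 A, A \in V & A x).

Definition is_open_cover (U : {fset set X}) : Prop :=
  (forall A, A \in U -> open A) /\
  (forall x : X, exists2 A, A \in U & A x).

Definition refines (V U : {fset set X}) : Prop :=
  forall A, A \in V -> exists2 B, B \in U & A `<=` B.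

Definition cover_sum (f : X -> R) (K : set X) (V : {fset set X}) : R :=
  (\sum_(A <- V | `[< A `&` K !=set0 >]) sup (f @` (A `&` K)))%R.

Definition Ffun (U : {fset set X}) (f : X -> R) (K : set X) : \bar R :=
  ereal_inf [set (cover_sum f K V)%:E | V in [set V | is_cover V /\ refines V U]].

(** Elements of K(X): nonempty closed subsets. *)
Definition nonempty_closed (K : set X) : Prop := K !=set0 /\ closed K.

Definition set_dist (x : X) (L : set X) : R := inf [set mdist x y | y in L].
Definition hausdorff_dist (K L : set X) : R :=
  Num.max (sup [set set_dist x L | x in K]) (sup [set set_dist y K | y in L]).

Definition usc_hyperspace (F : set X -> \bar R) : Prop :=
  forall K, nonempty_closed K -> forall c : R, (F K < c%:E)%E ->
    exists2 delta : R, 0 < delta &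
      forall L, nonempty_closed L -> hausdorff_dist K L < delta -> (F L < c%:E)%E.

End defs.

From HB Require Import structures.
From mathcomp Require Import all_boot all_order all_algebra finmap.
From mathcomp Require Import all_classical all_reals all_analysis.
Import numFieldTopology.Exports.
Set Implicit Arguments. Unset Strict Implicit. Unset Printing Implicit Defensive.
Import Order.TTheory GRing.Theory Num.Theory.
Local Open Scope classical_set_scope.
Local Open Scope ring_scope.

(* Fix a cover [V] refining [U] whose sum on [K] is below [c].
   If [K] contains a non-isolated point [x] with [f x < 0], every [L] close to
   [K] meets a small neighbourhood [B] of [x] inside one member of [U] on which
   [f < f x / 2]. Covers are arbitrary finite families of Borel sets, so the
   infinitely many sets [[set x'; p]] ([x'] in [L `&` B], [p] in [B]) can be
   adjoined one at a time, each lowering the sum by at least [- f x / 2]: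
   hence [F L = -oo].
   Otherwise the points of [K] where [f] is negative are isolated. For [L]
   close to [K], each [A] in [V] is modified on [L `\` K] only, where it is
   replaced by a neighbourhood of [A `&` K] inside the member of [U] containing
   [A] on which [f] stays below [sup_(A `&` K) f + eps]. The new family covers
   [X] and refines [U]; it is as large as [V] since distinct members of [V]
   differ on [K] or away from [K]; and a member losing its trace on [L] had
   [sup_(A `&` K) f >= - eps], for otherwise [A `&` K] contains an isolated
   point, which [L] must contain. So [F L] is at most the sum of [V] on [K]
   plus [eps * #|V|], which is below [c] for small [eps]. *)

Lemma near_all_fset {T : Type} (I : choiceType) (F : set_system T) (D : {fset I})
    (P : I -> T -> Prop) : Filter F ->
  (forall i, i \in D -> \forall t \near F, P i t) ->
  \forall t \near F, forall i, i \in D -> P i t.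
Proof.
move=> FF DP; apply: filterS (filter_bigI FF DP) => t DPt i iD.
exact: DPt.
Qed.

Lemma compact_continuous_ubound {R : realType} {T : topologicalType} (g : T -> R) :
  compact [set: T] -> continuous g -> exists M, forall x, g x <= M.
Proof.
move=> hX hg; have : compact (g @` [set: T]).
  by apply: continuous_compact => //; exact: continuous_subspaceT.
move=> /compact_bounded [M [_ hM]]; exists (M + 1) => x.
apply: le_trans (ler_norm _) _; apply: (hM (M + 1)); last by exists x.
by rewrite ltrDl.
Qed.

Section metric_facts.
Context {R : realType} {X : metricType R}.
Implicit Types (K L : set X) (x y z : X).

Lemma mdist_continuous (p : X) : continuous (mdist p).
Proof.
move=> x; apply/cvgrPdist_lt => e e0; apply/nbhs_ballP.
exists e => // y; rewrite ballEmdist /= => xy; rewrite ltr_distlC; apply/andP; split.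
- rewrite ltrBlDr; apply: le_lt_trans (metric_triangle _ y _) _.
  by rewrite ltrD2l metric_sym.
- by apply: le_lt_trans (metric_triangle _ x _) _; rewrite ltrD2l.
Qed.

Lemma compact_mdist_ubound (p : X) : compact [set: X] ->
  exists M, forall x y, mdist x y <= M.
Proof.
move=> hX; have [M hM] := compact_continuous_ubound hX (mdist_continuous (p := p)).
exists (M + M) => x y; rewrite (le_trans (metric_triangle _ p _)) //.
by rewrite lerD // metric_sym.
Qed.

Definition hausdorff_within (d : R) K L : Prop :=
  (forall y, L y -> exists2 x, K x & mdist x y < d) /\
  (forall x, K x -> exists2 y, L y & mdist x y < d).

Lemma sup_set_dist_lt (M d : R) K L y : (forall x y, mdist x y <= M) ->
  K !=set0 -> L y -> sup [set set_dist y' K | y' in L] < d ->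
  exists2 x, K x & mdist x y < d.
Proof.
move=> hM [x0 Kx0] Ly hsup.
have : set_dist y K < d.
  apply: le_lt_trans hsup; apply: ub_le_sup; last by exists y.
  exists M => _ [y' _ <-]; apply: le_trans (hM y' x0).
  apply: ge_inf; last by exists x0.
  by exists 0 => _ [x _ <-]; exact: mdist_ge0.
move/inf_lt => [|_ [x Kx <-] yx]; first by exists (mdist y x0), x0.
by exists x; rewrite // metric_sym.
Qed.

Lemma hausdorff_dist_lt_within (M d : R) K L : (forall x y, mdist x y <= M) ->
  K !=set0 -> L !=set0 -> hausdorff_dist K L < d -> hausdorff_within d K L.
Proof.
move=> hM K0 L0; rewrite /hausdorff_dist gt_max => /andP[hKL hLK].
split=> [y Ly|x Kx]; first exact: sup_set_dist_lt hM K0 Ly hLK.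
have [y Ly xy] := sup_set_dist_lt hM L0 Kx hKL.
by exists y; rewrite // metric_sym.
Qed.

Lemma compact_thicken K (O : set X) : compact K -> open O -> K `<=` O ->
  \forall d \near 0^'+, forall x y, K x -> mdist x y < d -> O y.
Proof.
move=> /compact_near_coveringP cK oO KO.
suff : \forall d \near 0^'+, K `<=` [set x | forall y, mdist x y < d -> O y].
  by apply: filterS => d dK x y /dK; apply.
apply: cK => x Kx.
have /nbhs_ballP [r r0 xrO] := open_nbhs_nbhs (conj oO (KO x Kx)).
have r20 : 0 < r / 2 by rewrite divr_gt0.
exists ([set x' | mdist x x' < r / 2], [set d | 0 < d < r / 2]) => /=.
  split; first by apply/nbhs_ballP; exists (r / 2) => // y; rewrite ballEmdist.
  apply: filterS (filterI (nbhs_right_gt 0) (nbhs_right_lt r20)).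
  by move=> d [/= -> ->].
move=> [x' d] [/= xx' /andP[_ dr]] y x'y; apply: xrO; rewrite ballEmdist /=.
rewrite (le_lt_trans (metric_triangle _ x' _)) // (splitr r) ltrD //.
exact: lt_trans x'y dr.
Qed.

Lemma hausdorff_within_subset K (O : set X) : compact K -> open O -> K `<=` O ->
  \forall d \near 0^'+, forall L, hausdorff_within d K L -> L `<=` O.
Proof.
move=> cK oO KO; apply: filterS (compact_thicken cK oO KO) => d thick L [hL _] y Ly.
by have [x Kx xy] := hL y Ly; exact: thick xy.
Qed.

Lemma hausdorff_within_meets K (N : set X) x : K x -> nbhs x N ->
  \forall d \near 0^'+, forall L, hausdorff_within d K L -> L `&` N !=set0.
Proof.
move=> Kx /nbhs_ballP [r r0 xN]; apply: filterS (nbhs_right_lt r0) => d dr L [_ hL].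
have [y Ly xy] := hL x Kx; exists y; split => //.
by apply: xN; rewrite ballEmdist; exact: lt_trans xy dr.
Qed.

Lemma hausdorff_within_isolated K x : K x -> ~ limit_point [set: X] x ->
  \forall d \near 0^'+, forall L, hausdorff_within d K L -> L x.
Proof.
rewrite not_limit_pointE => Kx [N xN Nx].
apply: filterS (hausdorff_within_meets Kx xN) => d hd L /hd [y [Ly Ny]].
by have /= <- := Nx y (conj I Ny).
Qed.

Lemma metric_accessible : accessible_space X.
Proof. apply: hausdorff_accessible; exact: metric_hausdorff. Qed.

Lemma hausdorff_within_notin K z : compact K -> ~ K z ->
  \forall d \near 0^'+, forall L, hausdorff_within d K L -> ~ L z.
Proof.
move=> cK Kz; have oz : open (~` [set z]).
  by apply: closed_openC; apply: accessible_closed_set1; exact: metric_accessible.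
apply: filterS (hausdorff_within_subset cK oz _) => [d hd L /hd LZ Lz|x Kx xz].
  exact: LZ z Lz erefl.
by apply: Kz; rewrite -xz.
Qed.
End metric_facts.

Section borel.
Context {R : realType} {X : metricType R}.
Implicit Types A B : set X.

Lemma borel_setC A : borel_set A -> borel_set (~` A).
Proof. by move=> hA; rewrite -setTD; exact: sigma_algebraCD. Qed.

Lemma borel_setU A B : borel_set A -> borel_set B -> borel_set (A `|` B).
Proof.
move=> hA hB; rewrite -bigcup2E; apply: sigma_algebra_bigcup => -[|[|n]] //=.
exact: sigma_algebra0.
Qed.

Lemma borel_setI A B : borel_set A -> borel_set B -> borel_set (A `&` B).
Proof.
move=> hA hB; rewrite -[_ `&` _]setCK setCI.
by apply: borel_setC; apply: borel_setU; exact: borel_setC.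
Qed.

Lemma open_borel_set A : open A -> borel_set A.
Proof. exact: sub_gen_smallest. Qed.

Lemma closed_borel_set A : closed A -> borel_set A.
Proof.
move=> cA; rewrite -[A]setCK; apply: borel_setC.
by apply: open_borel_set; exact: closed_openC.
Qed.

End borel.

Section patch.
Context {R : realType} {X : metricType R}.
Variables (K L : set X) (N : set X -> set X).
Implicit Types A B : set X.

Definition patch A : set X := (A `&` (K `|` ~` L)) `|` (N A `&` (L `\` K)).

Lemma patchE A z : K z \/ ~ L z -> patch A z <-> A z.
Proof.
move=> hz; split=> [[[]//|[_ [Lz nKz]]]|Az]; last by left.
by case: hz.
Qed.

Lemma patch_inj (V : {fset set X}) :
  {in V &, forall A1 A2, A1 <> A2 -> exists z, ~ (A1 z <-> A2 z) /\ (K z \/ ~ L z)} ->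
  {in V &, injective patch}.
Proof.
move=> sep A1 A2 A1V A2V eq12; apply: contrapT => ne.
have [z [hz sepz]] := sep A1 A2 A1V A2V ne.
by apply: hz; rewrite -(patchE A1 sepz) -(patchE A2 sepz) eq12.
Qed.

Lemma patch_sub A B : A `<=` B -> N A `<=` B -> patch A `<=` B.
Proof. by move=> AB NB z [[/AB]|[/NB]]. Qed.

Lemma patch_borel A : closed K -> closed L -> borel_set A -> borel_set (N A) ->
  borel_set (patch A).
Proof.
move=> /closed_borel_set bK /closed_borel_set bL hA hN.
by apply: borel_setU; apply: borel_setI => //;
  [apply: borel_setU|apply: borel_setI] => //; exact: borel_setC.
Qed.

Lemma patch_cover (V : {fset set X}) : closed K -> closed L -> is_cover V ->
  (forall A, A \in V -> borel_set (N A)) ->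
  L `\` K `<=` \bigcup_(A in [set` V]) N A ->
  is_cover [fset patch A | A in V]%fset.
Proof.
move=> cK cL [Vborel Vcover] Nborel LKN; split.
  move=> _ /imfsetP [A /= AV ->].
  by apply: patch_borel => //; [apply: Vborel|apply: Nborel].
move=> z; have [Kz_or_nLz|] := pselect (K z \/ ~ L z).
  have [A AV Az] := Vcover z; exists (patch A); first exact: in_imfset.
  exact/(patchE A Kz_or_nLz).
move=> /not_orP [nKz /contrapT Lz]; have [A AV NAz] := LKN z (conj Lz nKz).
by exists (patch A); [exact: in_imfset|right].
Qed.

End patch.

Section patch_sum.
Context {R : realType} {X : metricType R}.
Variables (f : X -> R) (K L : set X) (N : set X -> set X) (eps : R).
Hypothesis f_ubound : exists M, forall x, f x <= M.
Hypothesis eps_ge0 : 0 <= eps.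
Hypothesis N_le : forall A y, N A y -> exists2 x, (A `&` K) x & f y <= f x + eps.

Let patch := patch K L N.

Lemma le_sup_image (S : set X) x : S x -> f x <= sup (f @` S).
Proof.
move=> Sx; have [M fM] := f_ubound; apply: ub_le_sup; last by exists x.
by exists M => _ [y _ <-].
Qed.

Lemma patch_term_le (A : set X) :
  ((A `&` K) !=set0 -> sup (f @` (A `&` K)) + eps < 0 -> (A `&` K `&` L) !=set0) ->
  (if `[< patch A `&` L !=set0 >] then sup (f @` (patch A `&` L)) else 0) <=
  (if `[< A `&` K !=set0 >] then sup (f @` (A `&` K)) else 0) + eps.
Proof.
move=> keep_neg; set s := sup (f @` (A `&` K)).
have patchL_le y : (patch A `&` L) y -> f y <= s + eps.
  move=> [[[Ay [Ky|//]]|[/N_le [x AKx fyx] _]] _].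
    by apply: le_trans (le_sup_image (S := A `&` K) (conj Ay Ky)) _; rewrite lerDl.
  by apply: le_trans fyx _; rewrite lerD2r; exact: le_sup_image.
case: asboolP => [[z pLz]|patchL0].
  have AK : (A `&` K) !=set0.
    case: pLz => [[[Az [Kz|//]]|[/N_le [x AKx _] _]] _]; first by exists z.
    by exists x.
  rewrite asboolT //; apply: ge_sup; first by exists (f z), z.
  by move=> _ [y pLy <-]; exact: patchL_le.
case: asboolP => [AK|_]; last by rewrite add0r.
rewrite leNgt; apply/negP => /(keep_neg AK) [z [[Az Kz] Lz]].
by apply: patchL0; exists z; split => //; left; split => //; left.
Qed.

Lemma cover_sum_patch (V : {fset set X}) : {in V &, injective patch} ->
  (forall A, A \in V -> (A `&` K) !=set0 -> sup (f @` (A `&` K)) + eps < 0 ->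
    (A `&` K `&` L) !=set0) ->
  cover_sum f L [fset patch A | A in V]%fset <= cover_sum f K V + eps *+ #|` V|.
Proof.
move=> patch_inj keep_neg.
have -> : eps *+ #|` V| = \sum_(A <- V) eps.
  by rewrite big_const_seq count_predT iter_addr_0.
rewrite /cover_sum big_mkcond big_imfset //= [X in _ <= X + _]big_mkcond -big_split.
rewrite big_seq [X in _ <= X]big_seq; apply: ler_sum => A AV.
exact: patch_term_le (keep_neg A AV).
Qed.
End patch_sum.


Lemma exists_natmul_neg_le {R : archiRealFieldType} (a c r : R) : a < 0 ->
  exists n, c + a *+ n <= r.
Proof.
move=> a0; exists (Num.truncn ((c - r) / - a)).+1.
have := truncnS_gt ((c - r) / - a).
rewrite ltr_pdivrMr ?oppr_gt0 // mulrN mulr_natl ltrNr opprB => h.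
by rewrite addrC -lerBrDr ltW.
Qed.

Lemma limit_point_nbhs_infinite {T : topologicalType} (A N : set T) x :
  accessible_space T -> limit_point A x -> nbhs x N -> infinite_set (A `&` N).
Proof.
move=> T1 Ax xN finAN; set S := A `&` N `\ x.
have cS : closed S by apply: accessible_finite_set_closed.1 => //; exact: finite_setD.
have /Ax [y [yx Ay [Ny nSy]]] : nbhs x (N `&` ~` S).
  apply: filterI xN (open_nbhs_nbhs (conj (closed_openC cS) _)).
  by move=> [_]; apply.
by apply: nSy; split => //; exact/eqP.
Qed.

Lemma set2_inj {T : Type} (a : T) : injective (fun p => [set a; p]).
Proof.
move=> p q epq; have : [set a; q] p by rewrite -epq; right.
case=> [pa|//]; have : [set a; p] q by rewrite epq; right.
by case=> [qa|->]; rewrite ?pa ?qa.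
Qed.

Lemma infinite_fresh_set2 {T : Type} (W : {fset set T}) (P : set T) (a : T) :
  infinite_set P -> exists2 p, P p & [set a; p] \notin W.
Proof.
move=> infP; apply: contrapT => /forall2NP noP; apply: infP.
have PW : (fun p => [set a; p]) @` P `<=` [set` W].
  by move=> _ [p Pp <-]; have [//|/negP /negbNE] := noP p.
rewrite -(eq_finite_set (inj_card_eq (in2W (@set2_inj T a)))).
exact: sub_finite_set PW (finite_fset W).
Qed.

Section unbounded_below.
Context {R : realType} {X : metricType R}.
Variables (U : {fset set X}) (f : X -> R).
Hypothesis hU : is_open_cover U.

Lemma cover_sum_fsetU1 L (W : {fset set X}) D : D \notin W -> (D `&` L) !=set0 ->
  cover_sum f L (D |` W)%fset = sup (f @` (D `&` L)) + cover_sum f L W.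
Proof.
by move=> DW DL; rewrite /cover_sum big_mkcond big_fsetU1 //= -big_mkcond asboolT.
Qed.

Lemma Ffun_ninfty L (B N : set X) x a : B \in U -> N `<=` B ->
  limit_point [set: X] x -> nbhs x N -> (forall y, N y -> f y <= a) -> a < 0 ->
  L `&` N !=set0 -> Ffun U f L = -oo%E.
Proof.
move=> BU NB xlim xN Na a0 [x' [Lx' Nx']].
have infN : infinite_set N.
  by rewrite -[N]setTI; apply: limit_point_nbhs_infinite metric_accessible xlim xN.
have grow n : exists2 W, is_cover W /\ refines W U &
    cover_sum f L W <= cover_sum f L U + a *+ n.
  elim: n => [|n [W [[Wborel Wcover] WU] hW]].
    exists U; last by rewrite addr0.
    split; last by move=> A AU; exists A.
    by split; [move=> A /hU.1; exact: open_borel_set|exact: hU.2].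
  have [p Np pW] := infinite_fresh_set2 W x' infN.
  have DN : [set x'; p] `<=` N by move=> y [->|->].
  have DL : [set x'; p] `&` L !=set0 by exists x'; split => //; left.
  exists ([set x'; p] |` W)%fset.
    split; last first.
      move=> A; rewrite in_fset1U => /orP[/eqP->|/WU//]; exists B => //.
      exact: subset_trans DN NB.
    split=> [A|y]; last first.
      by have [A AW Ay] := Wcover y; exists A; rewrite // in_fset1U AW orbT.
    rewrite in_fset1U => /orP[/eqP->|/Wborel//]; apply: closed_borel_set.
    apply: accessible_finite_set_closed.1; first exact: metric_accessible.
    exact: finite_set2.
  rewrite cover_sum_fsetU1 // mulrS addrCA lerD //.
  apply: ge_sup => [|_ [y [Dy _] <-]]; last exact/Na/DN.
  by have [z Dz] := DL; exists (f z), z.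
apply: eq_ninfty => r; have [n hn] := exists_natmul_neg_le (cover_sum f L U) r a0.
have [W [Wcover WU] hW] := grow n.
apply: le_trans (ereal_inf_lbound _) _; first by exists W.
by rewrite lee_fin (le_trans hW hn).
Qed.

End unbounded_below.

Section near_hausdorff.
Context {R : realType} {X : metricType R}.
Variables (U : {fset set X}) (f : X -> R).
Hypotheses (hX : compact [set: X]) (hU : is_open_cover U) (hf : continuous f).
Implicit Types (K L : set X) (V : {fset set X}).

Lemma open_lt_preimage (r : R) : open (f @^-1` [set t | t < r]).
Proof. by apply: open_comp => [y _|]; [exact: hf|exact: open_lt]. Qed.

Lemma near_Ffun_ninfty K x : K x -> f x < 0 -> limit_point [set: X] x ->
  \forall d \near 0^'+, forall L, hausdorff_within d K L -> Ffun U f L = -oo%E.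
Proof.
move=> Kx fx0 xlim; have [B BU Bx] := hU.2 x.
set N := B `&` f @^-1` [set t | t < f x / 2].
have xN : nbhs x N.
  apply: open_nbhs_nbhs; split.
    by apply: openI; [exact: hU.1|exact: open_lt_preimage].
  by split => //=; rewrite ltr_pdivlMr // mulr_natr mulr2n gtrDl.
have half_neg : f x / 2 < 0 by rewrite ltr_pdivrMr // mul0r.
apply: filterS (hausdorff_within_meets Kx xN) => d hd L /hd LN.
by apply: (Ffun_ninfty hU BU _ xlim xN _ half_neg LN) => [y []|y [_ /ltW]].
Qed.

Lemma near_negative_meet K V (eps : R) : 0 <= eps ->
  (forall x, K x -> f x < 0 -> ~ limit_point [set: X] x) ->
  \forall d \near 0^'+, forall L, hausdorff_within d K L ->
    forall A, A \in V -> A `&` K !=set0 -> sup (f @` (A `&` K)) + eps < 0 ->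
    A `&` K `&` L !=set0.
Proof.
move=> eps0 hiso; have f_ub := compact_continuous_ubound hX hf.
suff : \forall d \near 0^'+, forall A, A \in V -> forall L, hausdorff_within d K L ->
    A `&` K !=set0 -> sup (f @` (A `&` K)) + eps < 0 -> A `&` K `&` L !=set0.
  by apply: filterS => d hd L hL A AV; exact: hd.
apply: near_all_fset => A AV.
have [[[x AKx] neg]|trivial] :=
  pselect (A `&` K !=set0 /\ sup (f @` (A `&` K)) + eps < 0).
  have fx0 : f x < 0.
    apply: le_lt_trans (le_sup_image f_ub AKx) (le_lt_trans _ neg).
    by rewrite lerDl.
  apply: filterS (hausdorff_within_isolated AKx.2 (hiso x AKx.2 fx0)).
  by move=> d hd L /hd Lx _ _; exists x.
by apply: filterE => d L _ AK neg; exfalso; exact: trivial.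
Qed.

Lemma near_separated K V : compact K ->
  \forall d \near 0^'+, forall L, hausdorff_within d K L ->
    {in V &, forall A1 A2, A1 <> A2 -> exists z, ~ (A1 z <-> A2 z) /\ (K z \/ ~ L z)}.
Proof.
move=> cK.
suff : \forall d \near 0^'+, forall A1, A1 \in V -> forall A2, A2 \in V ->
    forall L, hausdorff_within d K L -> A1 <> A2 ->
    exists z, ~ (A1 z <-> A2 z) /\ (K z \/ ~ L z).
  by apply: filterS => d hd L hL A1 A2 A1V A2V; exact: hd.
apply: near_all_fset => A1 _; apply: near_all_fset => A2 _.
have [->|ne] := pselect (A1 = A2); first by apply: filterE.
have [z hz] : exists z, ~ (A1 z <-> A2 z).
  apply: contrapT => /forallNP same; apply: ne; apply/seteqP; split => z;
    by have /contrapT [] := same z.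
have [Kz|Kz] := pselect (K z).
  by apply: filterE => d L _ _; exists z; split => //; left.
apply: filterS (hausdorff_within_notin cK Kz) => d hd L /hd nLz _.
by exists z; split => //; right.
Qed.

Lemma near_Ffun_le K V (eps : R) : closed K -> is_cover V -> refines V U -> 0 < eps ->
  (forall x, K x -> f x < 0 -> ~ limit_point [set: X] x) ->
  \forall d \near 0^'+, forall L, closed L -> hausdorff_within d K L ->
    (Ffun U f L <= (cover_sum f K V + eps *+ #|` V|)%:E)%E.
Proof.
move=> clK hV hVU eps0 hiso; have cK : compact K by exact: subclosed_compact clK hX _.
have /choice [B hB] : forall A, exists BA, A \in V -> BA \in U /\ A `<=` BA.
  move=> A; have [AV|_] := boolP (A \in V); last by exists setT.
  by have [BA BAU ABA] := hVU A AV; exists BA.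
pose N A := B A `&` \bigcup_(x in A `&` K) f @^-1` [set t | t < f x + eps].
have N_open A : A \in V -> open (N A).
  move=> AV; apply: openI; first exact: hU.1 (hB A AV).1.
  by apply: bigcup_open => x _; exact: open_lt_preimage.
have KN : K `<=` \bigcup_(A in [set` V]) N A.
  move=> x Kx; have [A AV Ax] := hV.2 x; exists A => //.
  split; first exact: (hB A AV).2.
  by exists x => //=; rewrite ltrDl.
have N_le A y : N A y -> exists2 x, (A `&` K) x & f y <= f x + eps.
  by move=> [_ [x AKx /ltW]]; exists x.
apply: (filterS3 _ _ (hausdorff_within_subset cK (bigcup_open N_open) KN)
  (near_negative_meet V (ltW eps0) hiso) (near_separated V cK)).
move=> d thick keep_neg sep L clL hKL.
apply: le_trans (ereal_inf_lbound _) _.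
  exists [fset patch K L N A | A in V]%fset => //; split.
    apply: patch_cover => // [A AV|y [Ly _]]; first exact: open_borel_set (N_open A AV).
    exact: thick hKL y Ly.
  move=> _ /imfsetP [A /= AV ->]; exists (B A); first exact: (hB A AV).1.
  by apply: patch_sub => [|y []//]; exact: (hB A AV).2.
rewrite lee_fin; apply: cover_sum_patch (ltW eps0) N_le _ _ _.
- exact: compact_continuous_ubound hX hf.
- exact: patch_inj (sep L hKL).
- exact: keep_neg L hKL.
Qed.
End near_hausdorff.

Lemma usc_hyperspace_near {R : realType} {X : metricType R} (F : set X -> \bar R) :
  compact [set: X] ->
  (forall K, nonempty_closed K -> forall c : R, (F K < c%:E)%E ->
    \forall d \near 0^'+, forall L, nonempty_closed L -> hausdorff_within d K L ->
      (F L < c%:E)%E) ->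
  usc_hyperspace F.
Proof.
move=> hX hF K hK c FKc; have [x0 _] := hK.1.
have [M hM] := compact_mdist_ubound x0 hX.
have [d [d0 hd]] := filter_ex (filterI (nbhs_right_gt 0) (hF K hK c FKc)).
exists d => // L hL hKL; apply: hd => //.
exact: hausdorff_dist_lt_within hM hK.1 hL.1 hKL.
Qed.

Theorem lemma2p3 (R : realType) (X : metricType R)
  (hX : compact [set: X])
  (T : X -> X) (hT : continuous T) (Tinv : X -> X)
  (hTinv : continuous Tinv) (hTK : cancel T Tinv) (hTinvK : cancel Tinv T)
  (U : {fset set X}) (hU : is_open_cover U)
  (f : X -> R) (hf : continuous f) :
  usc_hyperspace (Ffun U f).
Proof.
apply: (usc_hyperspace_near hX) => K [_ clK] c FKc.
have [_ [V [hV hVU] <-]] := ereal_inf_lt FKc; rewrite lte_fin => sVc.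
have [[x [Kx fx0 xlim]]|no_neg_limit] :=
  pselect (exists x, [/\ K x, f x < 0 & limit_point [set: X] x]).
  apply: filterS (near_Ffun_ninfty hU hf Kx fx0 xlim) => d hd L _ /hd ->.
  exact: ltNyr.
set n := #|` V|; set eps := (c - cover_sum f K V) / n.+1%:R.
have eps0 : 0 < eps by rewrite divr_gt0 // subr_gt0.
have small : cover_sum f K V + eps *+ n < c.
  have : eps *+ n.+1 = c - cover_sum f K V by rewrite -mulr_natr divfK.
  by rewrite mulrS => h; rewrite -ltrBrDl -h ltrDr.
apply: filterS (near_Ffun_le hX hU hf clK hV hVU eps0 _) => [d hd L [_ clL] hKL|].
  by apply: le_lt_trans (hd L clL hKL) _; rewrite lte_fin.
by move=> x Kx fx0 xlim; apply: no_neg_limit; exists x.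
Qed.
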